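(* Let $\mathcal{X}$ be a set, let $r:\mathcal{X}\to\mathbb{R}$ be a measurable function, and let $p$ be a probability distribution on $\mathcal{X}$ such that $\mathbb{E}_{j\sim p}[\exp(r(j))]<\infty$. For $x\in\mathcal{X}$ define $$P(y=1\mid x)=\mathbb{E}_{j\sim p}\left[\frac{\exp(r(x))}{\exp(r(x))+\exp(r(j))}\right],\qquad l(x)=\log\frac{P(y=1\mid x)}{1-P(y=1\mid x)}.$$ Then with $C=\log\big(\mathbb{E}_{j\sim p}[\exp(r(j))]\big)$, for every $x\in\mathcal{X}$, $$l(x)\ge r(x)-C.$$
   Context: This models a binary classifier (logit $l$) trained on Bradley–Terry preference data with underlying reward $r$, where the positive-class probability of $x$ equals the expected Bradley–Terry probability that $x$ is preferred over a random competitor $j\sim p$. *)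

From HB Require Import structures.
From mathcomp Require Import all_boot all_order all_algebra.
From mathcomp Require Import all_classical all_reals all_analysis.
Set Implicit Arguments. Unset Strict Implicit. Unset Printing Implicit Defensive.
Import Order.TTheory GRing.Theory Num.Theory.
Local Open Scope ring_scope.

Definition BT_prob d (T : measurableType d) (R : realType)
  (P : probability T R) (r : T -> R) (x : T) : R :=
  fine (\int[P]_j ((expR (r x) / (expR (r x) + expR (r j)))%:E))%E.

Definition BT_logit d (T : measurableType d) (R : realType)
  (P : probability T R) (r : T -> R) (x : T) : R :=
  ln (BT_prob P r x / (1 - BT_prob P r x)).

Definition BT_C d (T : measurableType d) (R : realType)
  (P : probability T R) (r : T -> R) : R :=
  ln (fine (\int[P]_j ((expR (r j))%:E))%E).

From HB Require Import structures.
From mathcomp Require Import all_boot all_order all_algebra.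
From mathcomp Require Import all_classical all_reals all_analysis.
From mathcomp Require Import measurable_realfun ring lra.
Set Implicit Arguments. Unset Strict Implicit. Unset Printing Implicit Defensive.
Import Order.TTheory GRing.Theory Num.Theory.
Import numFieldNormedType.Exports.
Local Open Scope ring_scope.

(* With a = exp (r x), the map t |-> a / (a + t) is convex on [0, +oo[, so
   Jensen's inequality, in the form of its tangent line at t = E[exp r], gives
   P(y=1|x) >= a / (a + E[exp r]).  As p |-> p / (1 - p) is increasing on
   [0, 1[, the odds of P(y=1|x) are at least a / E[exp r]; take logarithms. *)

Lemma Rintegral_gt0 d (T : measurableType d) (R : realType)
    (mu : {measure set T -> \bar R}) (D : set T) (h : T -> R) :
  measurable D -> (0 < mu D)%E -> mu.-integrable D (EFin \o h) ->
  (forall x, D x -> 0 < h x) -> 0 < \int[mu]_(x in D) h x.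
Proof.
move=> mD muD0 ih h0.
rewrite lt_neqAle Rintegral_ge0 ?andbT; last by move=> x /h0/ltW.
apply/negP => /eqP int0.
have abs_int0 : (\int[mu]_(x in D) `|(EFin \o h) x| = 0)%E.
  rewrite (eq_integral (EFin \o h)); last by move=> x /[!inE] /h0/ltW ? /=; rewrite ger0_norm.
  by rewrite -(fineK (integrable_fin_num mD ih)) -/(Rintegral mu D h) -int0.
have [N [mN muN0 DN]] := (ae_eq_integral_abs mu mD (measurable_int mu ih)).1 abs_int0.
have : (mu D <= mu N)%E.
  apply: le_measure; rewrite ?inE // => x Dx; apply: DN => /(_ Dx) /= [].
  by apply/eqP; rewrite gt_eqF ?h0.
by rewrite muN0 leNgt muD0.
Qed.

Lemma tangent_le_div_add (R : realFieldType) (a m t : R) :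
  0 < a -> 0 <= m -> 0 <= t ->
  a / (a + m) - a / (a + m) ^+ 2 * (t - m) <= a / (a + t).
Proof.
move=> a0 m0 t0.
have am0 : 0 < a + m by rewrite ltr_wpDr.
have at0 : 0 < a + t by rewrite ltr_wpDr.
rewrite -subr_ge0.
have -> : a / (a + t) - (a / (a + m) - a / (a + m) ^+ 2 * (t - m)) =
    a * (t - m) ^+ 2 / ((a + m) ^+ 2 * (a + t)).
  by field; rewrite !gt_eqF.
by apply: divr_ge0; apply: mulr_ge0; rewrite ?sqr_ge0 // ltW.
Qed.

Lemma odds_ge (R : realFieldType) (a m p : R) :
  0 < a -> 0 < m -> a / (a + m) <= p -> p < 1 -> a / m <= p / (1 - p).
Proof.
move=> a0 m0 + p1.
have q0 : 0 < 1 - p by rewrite subr_gt0.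
rewrite ler_pdivrMr ?addr_gt0// ler_pdivrMr// mulrAC ler_pdivlMr//.
nra.
Qed.

Lemma div_add_expR_gt0_lt1 (R : realType) (a t : R) :
  0 < a -> 0 < a / (a + expR t) < 1.
Proof.
move=> a0; have at0 : 0 < a + expR t by rewrite addr_gt0 ?expR_gt0.
by rewrite divr_gt0 //= ltr_pdivrMr // mul1r ltrDl expR_gt0.
Qed.

Section bradley_terry.
Context d (T : measurableType d) (R : realType) (P : probability T R) (r : T -> R).
Hypothesis mr : measurable_fun setT r.
Hypothesis expr_int_fin : (\int[P]_j (expR (r j))%:E < +oo)%E.

Let fine_probability_setT : fine (P setT) = 1.
Proof. by rewrite /= probability_setT. Qed.

Let probability_setT_gt0 : (0 < P setT)%E.
Proof. by rewrite /= probability_setT lte01. Qed.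

Let integrable_cst_prob (k : R) : P.-integrable setT (EFin \o cst k).
Proof. exact: finite_measure_integrable_cst. Qed.

Lemma integrable_expR : P.-integrable setT (EFin \o (expR \o r)).
Proof.
apply/integrableP; split; first exact/measurable_EFinP/measurableT_comp.
rewrite (eq_integral (fun j => (expR (r j))%:E)) // => j _.
by rewrite gee0_abs // lee_fin expR_ge0.
Qed.

Lemma Rintegral_expR_gt0 : 0 < \int[P]_j expR (r j).
Proof.
apply: Rintegral_gt0 => //; first exact: integrable_expR.
by move=> j _; exact: expR_gt0.
Qed.

Lemma measurable_div_add_expR (a : R) : 0 < a ->
  measurable_fun setT (fun j => a / (a + expR (r j))).
Proof.
move=> a0; apply: (measurableT_comp (f := fun t => a / (a + expR t))) mr.
apply: continuous_measurable_fun => t.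
apply: cvgM; first exact: cvg_cst.
apply: cvgV; first by rewrite gt_eqF // addr_gt0 ?expR_gt0.
by apply: cvgD; [exact: cvg_cst | exact: continuous_expR].
Qed.

Lemma integrable_div_add_expR (a : R) : 0 < a ->
  P.-integrable setT (EFin \o (fun j => a / (a + expR (r j)))).
Proof.
move=> a0; apply: le_integrable (integrable_cst_prob 1) => //.
  exact/measurable_EFinP/measurable_div_add_expR.
move=> j _ /=; have /andP[w0 w1] := div_add_expR_gt0_lt1 (r j) a0.
by rewrite lee_fin !ger0_norm // ltW.
Qed.

Lemma div_add_Rintegral_expR_le (a : R) : 0 < a ->
  a / (a + \int[P]_j expR (r j)) <= \int[P]_j (a / (a + expR (r j))).
Proof.
move=> a0; set M := \int[P]_j expR (r j); set c := a / (a + M) ^+ 2.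
have M0 : 0 <= M by apply: Rintegral_ge0 => j _; exact: expR_ge0.
have cexp_int : P.-integrable setT (EFin \o (fun j => c * expR (r j))).
  exact: integrableZl integrable_expR.
have tangent_int : \int[P]_j (a / (a + M) + c * M - c * expR (r j)) = a / (a + M).
  rewrite RintegralB //; last exact: integrable_cst_prob.
  rewrite Rintegral_cst // fine_probability_setT mulr1 RintegralZl -/M ?addrK //.
  exact: integrable_expR.
rewrite -tangent_int; apply: le_Rintegral => //.
- exact: (integrableB measurableT (integrable_cst_prob _) cexp_int).
- exact: integrable_div_add_expR.
- move=> j _; rewrite -addrA -mulrBr -opprB mulrN.
  exact: tangent_le_div_add (expR_ge0 _).
Qed.

Lemma Rintegral_div_add_expR_lt1 (a : R) : 0 < a ->
  \int[P]_j (a / (a + expR (r j))) < 1.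
Proof.
move=> a0; rewrite -subr_gt0.
have -> : 1 - \int[P]_j (a / (a + expR (r j))) =
    \int[P]_j (1 - a / (a + expR (r j))).
  rewrite RintegralB //; [|exact: integrable_cst_prob|exact: integrable_div_add_expR].
  by rewrite Rintegral_cst // fine_probability_setT mulr1.
apply: Rintegral_gt0 => //.
- exact: (integrableB measurableT (integrable_cst_prob _) (integrable_div_add_expR a0)).
- by move=> j _; have /andP[_] := div_add_expR_gt0_lt1 (r j) a0; rewrite subr_gt0.
Qed.

End bradley_terry.

Theorem mainTheorem2 (d : measure_display) (T : measurableType d) (R : realType)
  (P : probability T R) (r : T -> R) :
  measurable_fun setT r ->
  (\int[P]_j ((expR (r j))%:E) < +oo)%E ->
  forall x : T, r x - BT_C P r <= BT_logit P r x.
Proof.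
move=> mr expr_int_fin x.
have a0 : 0 < expR (r x) := expR_gt0 _.
have M0 := Rintegral_expR_gt0 mr expr_int_fin.
have odds := odds_ge a0 M0 (div_add_Rintegral_expR_le mr expr_int_fin a0)
  (Rintegral_div_add_expR_lt1 P mr a0).
have odds_gt0 := divr_gt0 a0 M0.
rewrite /BT_logit /BT_C -{1}(expRK (r x)) -ln_div ?posrE //.
by rewrite ler_ln ?posrE // (lt_le_trans odds_gt0 odds).
Qed.
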